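(* The assignment $\Gamma$ is a functor from the category $\mathfrak{B}$ of Bochvar algebras (with homomorphisms) to the category $\mathfrak{S}$ of Bochvar systems. It sends a Bochvar algebra $\mathbf{A}$ to $\mathbb{B}_{\mathbf{A}}$, and a homomorphism $f:\mathbf{A}_1\to\mathbf{A}_2$ to its restriction to the bottom fibre of $\mathbf{A}_1$. In particular, this restriction maps the bottom fibre of $\mathbf{A}_1$ into the bottom fibre of $\mathbf{A}_2$ and is a morphism of Bochvar systems $\mathbb{B}_{\mathbf{A}_1}\to\mathbb{B}_{\mathbf{A}_2}$.
   Context: $\mathbf{WK}^e$ is the three-element algebra on $\{0,\tfrac12,1\}$ of type $\langle\wedge,\vee,\neg,J_2,0,1\rangle$. Its operations are: - $\neg$ swaps $0,1$ and fixes $\tfrac12$; - $\wedge,\vee$ are Boolean on $\{0,1\}$ and return $\tfrac12$ if some argument is $\tfrac12$; - $J_2(1)=1$ and $J_2(\tfrac12)=J_2(0)=0$. Bochvar algebras are the members of $ISP(\mathbf{WK}^e)$. The $\{\wedge,\vee,\neg,0,1\}$-reduct of a Bochvar algebra is canonically a Płonka sum of Boolean algebras $\mathbf{A}_i$ over a join-semilattice $\langle I,\vee,i_0\rangle$; the bottom fibre is $\mathbf{A}_{i_0}$. A Bochvar system is a pair $\langle\mathbf{B},\mathbf{I}\rangle$ with $\mathbf{B}$ a Boolean algebra and $I\subseteq B$ containing $1$ and closed under $\wedge$. A morphism $\langle\mathbf{B}_1,\mathbf{I}_1\rangle\to\langle\mathbf{B}_2,\mathbf{I}_2\rangle$ is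 a Boolean homomorphism $g$ with $g(I_1)\subseteq I_2$. $\mathbb{B}_{\mathbf{A}}=\langle\mathbf{A}_{i_0},K\rangle$ with $K=\{J_2(1^{A_i}):i\in I\}$, where $1^{A_i}$ is the top of fibre $\mathbf{A}_i$. *)

(** The carrier of WK^e : {0, 1/2, 1}. *)
Inductive W3 : Type := W0 | Wh | W1.

Definition wneg (x : W3) : W3 :=
  match x with W0 => W1 | Wh => Wh | W1 => W0 end.
Definition wmeet (x y : W3) : W3 :=
  match x, y with
  | Wh, _ | _, Wh => Wh
  | W1, W1 => W1
  | _, _ => W0
  end.
Definition wjoin (x y : W3) : W3 :=
  match x, y with
  | Wh, _ | _, Wh => Wh
  | W0, W0 => W0
  | _, _ => W1
  end.
Definition wJ2 (x : W3) : W3 := match x with W1 => W1 | _ => W0 end.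

Record alg := Alg {
  car :> Type;
  meet : car -> car -> car;
  join : car -> car -> car;
  neg  : car -> car;
  J2   : car -> car;
  zero : car;
  one  : car }.

(** Bochvar algebras = ISP(WK^e): isomorphic to a subalgebra of a power
    (WK^e)^X, i.e. there is an injective homomorphism into W3^X. *)
Definition is_bochvar (A : alg) : Prop :=
  exists (X : Type) (e : A -> X -> W3),
    (forall a b, e a = e b -> a = b) /\
    (forall a b x, e (meet A a b) x = wmeet (e a x) (e b x)) /\
    (forall a b x, e (join A a b) x = wjoin (e a x) (e b x)) /\
    (forall a x, e (neg A a) x = wneg (e a x)) /\
    (forall a x, e (J2 A a) x = wJ2 (e a x)) /\
    (forall x, e (zero A) x = W0) /\
    (forall x, e (one A) x = W1).

Definition is_hom (A B : alg) (f : A -> B) : Prop :=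
  (forall a b, f (meet A a b) = meet B (f a) (f b)) /\
  (forall a b, f (join A a b) = join B (f a) (f b)) /\
  (forall a, f (neg A a) = neg B (f a)) /\
  (forall a, f (J2 A a) = J2 B (f a)) /\
  f (zero A) = zero B /\
  f (one A) = one B.

(** Płonka decomposition of the {meet,join,neg,0,1}-reduct: the top element
    1^{A_i} of the fibre A_i containing a is  a ∨ ¬a  (computed inside the
    Boolean algebra A_i); two elements lie in the same fibre iff their
    fibres have the same top. *)
Definition fibre_top (A : alg) (a : A) : A := join A a (neg A a).

Definition bottom_fibre (A : alg) (a : A) : Prop :=
  fibre_top A a = fibre_top A (zero A).

Definition Kset (A : alg) (k : A) : Prop :=
  exists a : A, k = J2 A (fibre_top A a).

Definition boolean_algebra_on {T : Type} (P : T -> Prop)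
  (m j : T -> T -> T) (n : T -> T) (z o : T) : Prop :=
  P z /\ P o /\
  (forall x y, P x -> P y -> P (m x y)) /\
  (forall x y, P x -> P y -> P (j x y)) /\
  (forall x, P x -> P (n x)) /\
  (forall x y z, P x -> P y -> P z -> m x (m y z) = m (m x y) z) /\
  (forall x y z, P x -> P y -> P z -> j x (j y z) = j (j x y) z) /\
  (forall x y, P x -> P y -> m x y = m y x) /\
  (forall x y, P x -> P y -> j x y = j y x) /\
  (forall x y, P x -> P y -> m x (j x y) = x) /\
  (forall x y, P x -> P y -> j x (m x y) = x) /\
  (forall x y z, P x -> P y -> P z -> m x (j y z) = j (m x y) (m x z)) /\
  (forall x, P x -> m x (n x) = z) /\
  (forall x, P x -> j x (n x) = o).

Definition bochvar_system_on {T : Type} (P : T -> Prop)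
  (m j : T -> T -> T) (n : T -> T) (z o : T) (I : T -> Prop) : Prop :=
  boolean_algebra_on P m j n z o /\
  (forall x, I x -> P x) /\ I o /\
  (forall x y, I x -> I y -> I (m x y)).

Definition BA_system (A : alg) : Prop :=
  bochvar_system_on (bottom_fibre A) (meet A) (join A) (neg A)
    (zero A) (one A) (Kset A).

Definition system_morphism_on {T1 T2 : Type}
  (P1 : T1 -> Prop) (m1 j1 : T1 -> T1 -> T1) (n1 : T1 -> T1) (z1 o1 : T1)
  (I1 : T1 -> Prop)
  (P2 : T2 -> Prop) (m2 j2 : T2 -> T2 -> T2) (n2 : T2 -> T2) (z2 o2 : T2)
  (I2 : T2 -> Prop) (g : T1 -> T2) : Prop :=
  (forall x, P1 x -> P2 (g x)) /\
  (forall x y, P1 x -> P1 y -> g (m1 x y) = m2 (g x) (g y)) /\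
  (forall x y, P1 x -> P1 y -> g (j1 x y) = j2 (g x) (g y)) /\
  (forall x, P1 x -> g (n1 x) = n2 (g x)) /\
  g z1 = z2 /\ g o1 = o2 /\
  (forall x, I1 x -> I2 (g x)).

Definition BA_morphism (A1 A2 : alg) (f : A1 -> A2) : Prop :=
  system_morphism_on
    (bottom_fibre A1) (meet A1) (join A1) (neg A1) (zero A1) (one A1) (Kset A1)
    (bottom_fibre A2) (meet A2) (join A2) (neg A2) (zero A2) (one A2) (Kset A2)
    f.

(* A Bochvar algebra A embeds into a power (WK^e)^X.  Since a ∨ ¬a is 1 at the
   coordinates where a is Boolean and 1/2 elsewhere, the bottom fibre consists
   exactly of the elements with no coordinate 1/2, so it is a subalgebra of the
   Boolean power {0,1}^X and hence a Boolean algebra.  J2 takes only Boolean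
   values, so K lies in the bottom fibre; and K is closed under ∧ because both
   a ↦ a ∨ ¬a and J2 commute with ∧.  A homomorphism commutes with a ↦ a ∨ ¬a,
   hence it preserves the bottom fibre and K. *)
From Stdlib Require Import FunctionalExtensionality.

Lemma boolean_algebra_on_W3 :
  boolean_algebra_on (fun w => w <> Wh) wmeet wjoin wneg W0 W1.
Proof.
  repeat split; intros;
    repeat match goal with w : W3 |- _ => destruct w end; simpl in *; congruence.
Qed.

Lemma boolean_algebra_on_power {T : Type} (X : Type) (P : T -> Prop)
    (m j : T -> T -> T) (n : T -> T) (z o : T) :
  boolean_algebra_on P m j n z o ->
  boolean_algebra_on (fun f : X -> T => forall x, P (f x))
    (fun f g x => m (f x) (g x)) (fun f g x => j (f x) (g x))
    (fun f x => n (f x)) (fun _ => z) (fun _ => o).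
Proof.
  intros (Pz & Po & Pm & Pj & Pn & assoc_m & assoc_j & comm_m & comm_j
          & absorb_m & absorb_j & distr & compl_m & compl_j).
  repeat split; intros; try (apply functional_extensionality; intro);
    auto.
Qed.

Lemma boolean_algebra_on_embedding {T U : Type} (e : T -> U)
    (P : T -> Prop) (m j : T -> T -> T) (n : T -> T) (z o : T)
    (Q : U -> Prop) (m' j' : U -> U -> U) (n' : U -> U) (z' o' : U) :
  (forall a b, e a = e b -> a = b) ->
  (forall a, P a <-> Q (e a)) ->
  (forall a b, e (m a b) = m' (e a) (e b)) ->
  (forall a b, e (j a b) = j' (e a) (e b)) ->
  (forall a, e (n a) = n' (e a)) ->
  e z = z' -> e o = o' ->
  boolean_algebra_on Q m' j' n' z' o' -> boolean_algebra_on P m j n z o.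
Proof.
  intros e_inj PQ e_m e_j e_n e_z e_o
    (Qz & Qo & Qm & Qj & Qn & assoc_m & assoc_j & comm_m & comm_j
     & absorb_m & absorb_j & distr & compl_m & compl_j).
  repeat split; intros;
    repeat match goal with H : P _ |- _ => apply PQ in H end;
    first [apply PQ | apply e_inj];
    repeat first [rewrite e_m | rewrite e_j | rewrite e_n | rewrite e_z | rewrite e_o];
    auto.
Qed.

Section BochvarRepresentation.

Variables (A : alg) (X : Type) (e : A -> X -> W3).
Hypothesis e_inj : forall a b, e a = e b -> a = b.
Hypothesis e_meet : forall a b x, e (meet A a b) x = wmeet (e a x) (e b x).
Hypothesis e_join : forall a b x, e (join A a b) x = wjoin (e a x) (e b x).
Hypothesis e_neg : forall a x, e (neg A a) x = wneg (e a x).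
Hypothesis e_J2 : forall a x, e (J2 A a) x = wJ2 (e a x).
Hypothesis e_zero : forall x, e (zero A) x = W0.
Hypothesis e_one : forall x, e (one A) x = W1.

Lemma rep_ext (a b : A) : (forall x, e a x = e b x) -> a = b.
Proof. intro H; apply e_inj, functional_extensionality, H. Qed.

Local Ltac pointwise :=
  apply rep_ext; intro; unfold fibre_top;
  repeat first [rewrite e_meet | rewrite e_join | rewrite e_neg
               | rewrite e_J2 | rewrite e_zero | rewrite e_one];
  repeat match goal with |- context [e ?a ?x] => destruct (e a x) end;
  reflexivity.

Lemma bottom_fibre_rep (a : A) : bottom_fibre A a <-> forall x, e a x <> Wh.
Proof.
  unfold bottom_fibre, fibre_top; split.
  - intros top_a x; apply (f_equal (fun t => e t x)) in top_a.
    rewrite !e_join, !e_neg, e_zero in top_a.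
    destruct (e a x); discriminate.
  - intro defined; apply rep_ext; intro x.
    rewrite !e_join, !e_neg, e_zero.
    specialize (defined x); destruct (e a x); simpl; congruence.
Qed.

Lemma boolean_algebra_on_bottom_fibre :
  boolean_algebra_on (bottom_fibre A) (meet A) (join A) (neg A) (zero A) (one A).
Proof.
  apply (boolean_algebra_on_embedding e _ _ _ _ _ _
           (fun f : X -> W3 => forall x, f x <> Wh)
           (fun f g x => wmeet (f x) (g x)) (fun f g x => wjoin (f x) (g x))
           (fun f x => wneg (f x)) (fun _ => W0) (fun _ => W1));
    intros; try apply functional_extensionality; auto.
  - apply bottom_fibre_rep.
  - exact (boolean_algebra_on_power X _ _ _ _ _ _ boolean_algebra_on_W3).
Qed.

Lemma J2_bottom_fibre (a : A) : bottom_fibre A (J2 A a).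
Proof.
  apply bottom_fibre_rep; intro x; rewrite e_J2; destruct (e a x); discriminate.
Qed.

Lemma fibre_top_one : fibre_top A (one A) = one A.
Proof. pointwise. Qed.

Lemma J2_one : J2 A (one A) = one A.
Proof. pointwise. Qed.

Lemma fibre_top_meet (a b : A) :
  fibre_top A (meet A a b) = meet A (fibre_top A a) (fibre_top A b).
Proof. pointwise. Qed.

Lemma J2_meet (a b : A) : J2 A (meet A a b) = meet A (J2 A a) (J2 A b).
Proof. pointwise. Qed.

Lemma Kset_bottom_fibre (k : A) : Kset A k -> bottom_fibre A k.
Proof. intros [a ->]; apply J2_bottom_fibre. Qed.

Lemma Kset_one : Kset A (one A).
Proof. exists (one A); rewrite fibre_top_one, J2_one; reflexivity. Qed.

Lemma Kset_meet (k l : A) : Kset A k -> Kset A l -> Kset A (meet A k l).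
Proof.
  intros [a ->] [b ->]; exists (meet A a b).
  rewrite fibre_top_meet, J2_meet; reflexivity.
Qed.

Lemma BA_system_of_rep : BA_system A.
Proof.
  split; [exact boolean_algebra_on_bottom_fibre |].
  split; [exact Kset_bottom_fibre |].
  split; [exact Kset_one | exact Kset_meet].
Qed.

End BochvarRepresentation.

Lemma is_bochvar_BA_system (A : alg) : is_bochvar A -> BA_system A.
Proof.
  intros (X & e & e_inj & e_meet & e_join & e_neg & e_J2 & e_zero & e_one).
  exact (BA_system_of_rep A X e e_inj e_meet e_join e_neg e_J2 e_zero e_one).
Qed.

Section Homomorphisms.

Variables (A B : alg) (f : A -> B).
Hypothesis f_hom : is_hom A B f.

Lemma hom_fibre_top (a : A) : f (fibre_top A a) = fibre_top B (f a).
Proof.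
  destruct f_hom as (_ & f_join & f_neg & _).
  unfold fibre_top; rewrite f_join, f_neg; reflexivity.
Qed.

Lemma hom_bottom_fibre (a : A) : bottom_fibre A a -> bottom_fibre B (f a).
Proof.
  unfold bottom_fibre; intro top_a.
  destruct f_hom as (_ & _ & _ & _ & f_zero & _).
  rewrite <- f_zero, <- !hom_fibre_top, top_a; reflexivity.
Qed.

Lemma hom_Kset (k : A) : Kset A k -> Kset B (f k).
Proof.
  intros [a ->]; exists (f a).
  destruct f_hom as (_ & _ & _ & f_J2 & _).
  rewrite f_J2, hom_fibre_top; reflexivity.
Qed.

Lemma hom_BA_morphism : BA_morphism A B f.
Proof.
  destruct f_hom as (f_meet & f_join & f_neg & _ & f_zero & f_one).
  repeat split; auto using hom_bottom_fibre, hom_Kset.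
Qed.

End Homomorphisms.

Theorem lemma3p7 :
  (forall A : alg, is_bochvar A -> BA_system A) /\
  (forall (A1 A2 : alg) (f : A1 -> A2),
     is_bochvar A1 -> is_bochvar A2 -> is_hom A1 A2 f ->
     (forall a, bottom_fibre A1 a -> bottom_fibre A2 (f a)) /\
     BA_morphism A1 A2 f).
Proof.
  split.
  - exact is_bochvar_BA_system.
  - intros A1 A2 f _ _ f_hom.
    split.
    + exact (hom_bottom_fibre A1 A2 f f_hom).
    + exact (hom_BA_morphism A1 A2 f f_hom).
Qed.
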